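(* Let $s\ge2$ groups of positive integer moduli be given: Group $j$ ($1\le j\le s$) consists of $L_j\ge1$ moduli $0<M_{j,1}<\dots<M_{j,L_j}$; put $\delta_j=\operatorname{lcm}(M_{j,1},\dots,M_{j,L_j})$ and assume $\delta_1,\dots,\delta_s$ pairwise distinct. Let $N$ be an integer with $0\le N<\operatorname{lcm}(\delta_1,\dots,\delta_s)$, let $r_{j,i}$ be the remainder of $N$ modulo $M_{j,i}$ and $n_{j,i}=(N-r_{j,i})/M_{j,i}$. Let $\tilde r_{j,i}$ be integers with $0\le\tilde r_{j,i}\le M_{j,i}-1$ and $|\tilde r_{j,i}-r_{j,i}|\le\tau_j$ for all $i,j$, where $$\tau_j<\min(G_j,G)\quad(1\le j\le s),$$ with $G_j=\max_{1\le i\le L_j}\min_{q\ne i}\gcd(M_{j,i},M_{j,q})/4$ if $L_j\ge2$, $G_j=M_{j,1}/4$ if $L_j=1$, and $G=\max_{1\le i\le s}\min_{q\ne i}\gcd(\delta_i,\delta_q)/4$. Then the two-stage algorithm (described in the context) outputs $\hat n_{j,i}=n_{j,i}$ for all $i,j$, and its estimate $$\hat N=\left[\frac1{\sum_{j=1}^sL_j}\sum_{j=1}^s\sum_{i=1}^{L_j}(\hat n_{j,i}M_{j,i}+\tilde r_{j,i})\right]$$ satisfies $|\hat N-N|\le\left[\frac{\sum_{j=1}^sL_j\tau_j}{\sum_{j=1}^sL_j}\right]$.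
   Context: For $x\in\mathbb R$, $[x]$ denotes the unique integer with $-1/2\le x-[x]<1/2$. Single-stage algorithm $\mathcal A$: for pairwise distinct positive integers $P_1,\dots,P_m$ ($m\ge2$), a reference index $k$ and integers $x_1,\dots,x_m$: for $i\ne k$ put $m_{ki}=\gcd(P_k,P_i)$, $\Gamma_{ki}=P_k/m_{ki}$, $\Gamma_{ik}=P_i/m_{ki}$, $\hat q_{ik}=[(x_i-x_k)/m_{ki}]$, let $\bar\Gamma_{ki}$ be an inverse of $\Gamma_{ki}$ modulo $\Gamma_{ik}$ and $\hat\xi_{ik}\equiv\hat q_{ik}\bar\Gamma_{ki}\pmod{\Gamma_{ik}}$, $0\le\hat\xi_{ik}<\Gamma_{ik}$; let $\hat n_k$ be the least nonnegative $y$ with $y\equiv\hat\xi_{ik}\pmod{\Gamma_{ik}}$ for all $i\ne k$ (the algorithm fails if none exists), and $\hat n_i=(\hat n_k\Gamma_{ki}-\hat q_{ik})/\Gamma_{ik}$ for $i\ne k$. Two-stage algorithm: Stage 1: for each group $j$, if $L_j\ge2$ apply $\mathcal A$ to $M_{j,1},\dots,M_{j,L_j}$ with inputs $\tilde r_{j,1},\dots,\tilde r_{j,L_j}$ and a reference index attaining $\max_i\min_{q\ne i}\gcd(M_{j,i},M_{j,q})$, obtaining $\hat K_{j,1},\dots,\hat K_{j,L_j}$; if $L_j=1$ set $\hat K_{j,1}=0$. Put $\hat N_j=[\frac1{L_j}\sum_{i=1}^{L_j}(\hat K_{j,i}M_{j,i}+\tilde r_{j,i})]$. Stage 2: apply $\mathcal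 A$ to the moduli $\delta_1,\dots,\delta_s$ with inputs $\hat N_1,\dots,\hat N_s$ and a reference index attaining $\max_i\min_{q\ne i}\gcd(\delta_i,\delta_q)$, obtaining $\hat l_1,\dots,\hat l_s$. Output $\hat n_{j,i}=\hat l_j\delta_j/M_{j,i}+\hat K_{j,i}$. *)

From Stdlib Require Import ClassicalEpsilon.
From mathcomp Require Import all_boot all_order all_algebra.
Set Implicit Arguments. Unset Strict Implicit. Unset Printing Implicit Defensive.
Import Order.TTheory GRing.Theory Num.Theory.
Local Open Scope ring_scope.

(* [x] : the unique integer with -1/2 <= x - [x] < 1/2, i.e. floor (x + 1/2). *)
Definition round {R : archiRealFieldType} (x : R) : int := Num.floor (x + 2^-1).

(* min_{q <> i, q < m} gcd(P_i, P_q)  (indices 0-based; default P i is harmless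
   because every gcd(P_i,P_q) <= P_i when P_i > 0, and the range is nonempty for m >= 2) *)
Definition mingcd (m : nat) (P : nat -> nat) (i : nat) : nat :=
  \big[minn/P i]_(q < m | (q : nat) != i) gcdn (P i) (P q).

Definition maxmingcd (m : nat) (P : nat -> nat) : nat :=
  (\max_(i < m) mingcd m P i)%N.

Definition least_nat (p : pred nat) : option nat :=
  match excluded_middle_informative (exists y, p y) with
  | left h => Some (ex_minn h)
  | right _ => None
  end.

Section SingleStage.
Variables (m : nat) (P : nat -> nat) (k : nat) (x : nat -> int).

Definition A_m (i : nat) : nat := gcdn (P k) (P i).
Definition A_Gki (i : nat) : nat := (P k %/ A_m i)%N.
Definition A_Gik (i : nat) : nat := (P i %/ A_m i)%N.
Definition A_q (i : nat) : int :=
  round (((x i - x k)%:~R / (A_m i)%:R) : rat).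
(* an inverse of Gamma_{ki} modulo Gamma_{ik} (Bezout coefficient) *)
Definition A_Gbar (i : nat) : nat := (egcdn (A_Gki i) (A_Gik i)).1.
Definition A_xi (i : nat) : int :=
  ((A_q i * (A_Gbar i)%:Z) %% (A_Gik i)%:Z)%Z.

Definition A_congr (y : nat) : bool :=
  all (fun i => (i == k) || (y%:Z == A_xi i %[mod (A_Gik i)%:Z])%Z) (iota 0 m).

(* output hat n_1 .. hat n_m (as a function on indices 0..m-1), or None = failure *)
Definition algA : option (nat -> int) :=
  match least_nat A_congr with
  | Some nk => Some (fun i => if i == k then nk%:Z
                     else ((nk%:Z * (A_Gki i)%:Z - A_q i) %/ (A_Gik i)%:Z)%Z)
  | None => None
  end.
End SingleStage.

Section TwoStage.
(* s groups; group j (0 <= j < s) has L j moduli M j 0 < ... < M j (L j - 1);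
   rt j i are the erroneous remainders; kr j is the stage-1 reference index
   of group j, k0 the stage-2 reference index. *)
Variables (s : nat) (L : nat -> nat) (M : nat -> nat -> nat)
  (rt : nat -> nat -> int) (kr : nat -> nat) (k0 : nat).

Definition delta (j : nat) : nat := (\big[lcmn/1]_(i < L j) M j i)%N.

Definition stage1 (j : nat) : option (nat -> int) :=
  if (2 <= L j)%N then algA (L j) (M j) (kr j) (rt j) else Some (fun _ => 0).

Definition Khat (j : nat) : nat -> int := odflt (fun _ => 0) (stage1 j).

Definition Nhat_group (j : nat) : int :=
  round ((L j)%:R^-1 * \sum_(i < L j) ((Khat j i * (M j i)%:Z + rt j i)%:~R) : rat).

Definition two_stage : option (nat -> nat -> int) :=
  if all (fun j => isSome (stage1 j)) (iota 0 s) then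
    match algA s delta k0 Nhat_group with
    | Some lhat => Some (fun j i => lhat j * ((delta j %/ M j i)%N)%:Z + Khat j i)
    | None => None
    end
  else None.

Definition Nhat_final (nh : nat -> nat -> int) : int :=
  round (((\sum_(j < s) L j)%N%:R^-1 *
          \sum_(j < s) \sum_(i < L j) ((nh j i * (M j i)%:Z + rt j i)%:~R)) : rat).
End TwoStage.

(* If a residue vector has errors of size e_i, the difference of two residues
   x_i - x_k, divided by g = gcd(P_k, P_i), lies within (e_i - e_k)/g of an
   integer; when 2|e_i - e_k| < g, rounding recovers that integer, which is
   n_k Gamma_ki - n_i Gamma_ik.  Hence n_k satisfies every congruence solved by
   the algorithm, and any two solutions differ by a multiple of
   lcm(P)/P_k, so the least solution is n_k as soon as N < lcm(P).  The
   remaining n_i follow from the same identity.  The two-stage algorithm first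
   applies this within each group to N mod delta_j; averaging the corrected
   residues of group j gives N mod delta_j with error at most tau_j, which is
   small enough to apply the single-stage result once more to the delta_j. *)

From Stdlib Require Import ClassicalEpsilon.
From mathcomp Require Import all_boot all_order all_algebra.
From mathcomp Require Import zify ring lra.
Set Implicit Arguments. Unset Strict Implicit. Unset Printing Implicit Defensive.
Import Order.TTheory GRing.Theory Num.Theory.
Local Open Scope ring_scope.

Lemma round_eq (F : archiRealFieldType) (x : F) (z : int) :
  z%:~R - 2^-1 <= x -> x < z%:~R + 2^-1 -> round x = z.
Proof.
move=> h1 h2; rewrite /round; apply: floor_def; rewrite intrD.
by apply/andP; split; lra.
Qed.

Lemma round_itv (F : archiRealFieldType) (x : F) :
  (round x)%:~R - 2^-1 <= x /\ x < (round x)%:~R + 2^-1.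
Proof.
rewrite /round; have /andP[h1 h2] := floor_itv (x + 2^-1).
by rewrite intrD in h2; split; lra.
Qed.

Lemma round_le (F : archiRealFieldType) (x y : F) : x <= y -> round x <= round y.
Proof. by move=> h; rewrite /round; apply: le_floor; rewrite lerD2r. Qed.

Lemma round_int (F : archiRealFieldType) (z : int) : round (z%:~R : F) = z.
Proof. by apply: round_eq; lra. Qed.

Lemma round_divMDl (F : archiRealFieldType) (z d : int) (g : nat) :
  2 * `|d| < g%:Z -> round (((z * g%:Z + d)%:~R / g%:R) : F) = z.
Proof.
move=> hd; have g0 : (0 < g)%N by move: hd; lia.
have gF : (0 : F) < g%:R by rewrite ltr0n.
have hdF : - g%:R < 2 * (d%:~R : F) < g%:R.
  have /andP[h1 h2] : - g%:Z < 2 * d < g%:Z by move: hd; lia.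
  by rewrite -(ltr_int F) intrN intrM in h1; rewrite -(ltr_int F) intrM in h2; apply/andP.
rewrite intrD intrM /= mulrDl mulfK ?gt_eqF //.
have /andP[h1 h2] : - 2^-1 < (d%:~R / g%:R : F) < 2^-1.
  by rewrite ltr_pdivrMr // ltr_pdivlMr //; case/andP: hdF => *; apply/andP; split; lra.
by apply: round_eq; lra.
Qed.

Lemma round_mean_dist_le (n : nat) (Y : int) (e : 'I_n -> int) (c : int) : (0 < n)%N ->
  (forall i, `|e i| <= c) ->
  `|round ((n%:R^-1 * \sum_(i < n) (Y + e i)%:~R) : rat) - Y| <= c.
Proof.
move=> n0 he.
have -> : (n%:R^-1 * \sum_(i < n) (Y + e i)%:~R : rat) =
          Y%:~R + n%:R^-1 * \sum_(i < n) (e i)%:~R.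
  rewrite (eq_bigr (fun i => Y%:~R + (e i)%:~R)); last by move=> i _; rewrite intrD.
  rewrite big_split /= sumr_const card_ord mulrDr -[Y%:~R *+ n]mulr_natr mulrCA.
  by rewrite mulVf ?mulr1 // pnatr_eq0 -lt0n.
set a := _ * _.
have /andP[ha1 ha2] : - c%:~R <= a <= c%:~R.
  rewrite -ler_norml /a normrM ger0_norm ?invr_ge0 ?ler0n // ler_pdivrMl ?ltr0n //.
  apply: le_trans (ler_norm_sum _ _ _) _.
  have -> : n%:R * c%:~R = \sum_(i < n) (c%:~R : rat) by rewrite sumr_const card_ord mulr_natl.
  by apply: ler_sum => i _; rewrite -intr_norm ler_int.
have r1 : round (Y%:~R + a) <= Y + c.
  by rewrite -(round_int rat (Y + c)) intrD; apply: round_le; rewrite lerD2l.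
have r2 : Y - c <= round (Y%:~R + a).
  by rewrite -(round_int rat (Y - c)) intrB; apply: round_le; rewrite lerD2l.
by rewrite ler_norml; apply/andP; split; lia.
Qed.

Lemma round_shift_dist_le (R : archiRealFieldType) (S : nat) (N T : int) (b : R) :
  (0 < S)%N -> `|T|%:~R <= b * S%:R ->
  `|round ((S%:R^-1 * (S%:R * N%:~R + T%:~R)) : rat) - N| <= round b.
Proof.
move=> S0 hT.
have SR : (0 : R) < S%:R by rewrite ltr0n.
have -> : (S%:R^-1 * (S%:R * N%:~R + T%:~R) : rat) = N%:~R + T%:~R / S%:R.
  by field; rewrite pnatr_eq0 -lt0n.
set z := round _.
have [h1 h2] := @round_itv rat (N%:~R + T%:~R / S%:R); rewrite -/z in h1 h2.
rewrite -(ler_rat R) in h1; rewrite -(ltr_rat R) in h2.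
rewrite !rmorphD /= rmorphN fmorph_div fmorphV /= !ratr_int ratr_nat in h1 h2.
have /andP[hq1 hq2] : - b <= (T%:~R / S%:R : R) <= b.
  by rewrite -ler_norml normrM normfV normr_nat ler_pdivrMr // -intr_norm.
rewrite /round ler_norml lerNl; apply/andP; split; rewrite floor_ge_int ?intrN intrB; lra.
Qed.

Lemma coprime_divn_gcd (a b : nat) : (0 < a)%N -> coprime (a %/ gcdn a b) (b %/ gcdn a b).
Proof.
move=> a0; have g0 : (0 < gcdn a b)%N by rewrite gcdn_gt0 a0.
rewrite /coprime -(eqn_pmul2l g0) muln1 muln_gcdr (mulnC _ (a %/ _)%N).
by rewrite (mulnC _ (b %/ _)%N) !divnK ?dvdn_gcdl ?dvdn_gcdr.
Qed.

Lemma dvdn_mul_divn_gcd (m n d : nat) : (n %/ gcdn m n %| d)%N -> (n %| d * m)%N.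
Proof.
have [->|m0 hd] := posnP m; first by rewrite muln0 dvdn0.
rewrite -(divnK (dvdn_gcdr m n)); apply: dvdn_mul hd _.
exact: dvdn_gcdl.
Qed.

Lemma biglcm_gt0 (m : nat) (F : 'I_m -> nat) : (forall i : 'I_m, 0 < F i)%N ->
  (0 < \big[lcmn/1%N]_(i < m) F i)%N.
Proof.
move=> h; apply: (big_ind (fun x => 0 < x)%N) => //.
by move=> a b ha hb; rewrite lcmn_gt0 ha hb.
Qed.

Lemma divn_subn_mod (n d : nat) : (0 < d)%N -> ((n - n %% d) %/ d = n %/ d)%N.
Proof. by move=> d0; rewrite {1}(divn_eq n d) addnK mulnK. Qed.

Lemma divnMD_dvd (n d p : nat) : (0 < p)%N -> (p %| d)%N ->
  (n %/ d * (d %/ p) + (n %% d) %/ p = n %/ p)%N.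
Proof.
move=> p0 pd.
by rewrite {3}(divn_eq n d) -[in RHS](divnK pd) mulnA divnMDl // divnK.
Qed.

Lemma mingcd_le m P k i : (i < m)%N -> i != k -> (mingcd m P k <= gcdn (P k) (P i))%N.
Proof.
move=> im ik; rewrite /mingcd.
move: (mem_index_enum (Ordinal im)); elim: (index_enum _) => [|j r IH] //.
rewrite inE big_cons => /orP[/eqP <-|/IH h]; first by rewrite /= ik geq_minl.
by case: ifP => _ //; exact: leq_trans (geq_minr _ _) h.
Qed.

Lemma double_normB_lt_mingcd (R : archiRealFieldType) m P k (e : nat -> int) (t : nat -> R) :
  (k < m)%N ->
  (forall i, (i < m)%N -> `|e i|%:~R <= t i /\ t i < (mingcd m P k)%:R / 4) ->
  forall i, (i < m)%N -> i != k -> 2 * `|e i - e k| < (gcdn (P k) (P i))%:Z.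
Proof.
move=> km he i im ik.
have [hi ti] := he i im; have [hk tk] := he k km.
have hg : ((mingcd m P k)%:R : R) <= (gcdn (P k) (P i))%:R by rewrite ler_nat mingcd_le.
rewrite -(ltr_int R) intrM intr_norm.
have : `|(e i - e k)%:~R : R| <= `|(e i)%:~R| + `|(e k)%:~R| by rewrite intrB ler_normB.
rewrite intr_norm in hi; rewrite intr_norm in hk.
rewrite (_ : 2%:~R = 2 :> R) // (_ : (gcdn (P k) (P i))%:Z%:~R = (gcdn (P k) (P i))%:R :> R) //.
lra.
Qed.

Lemma least_nat_min (p : pred nat) (n : nat) :
  p n -> exists y, [/\ least_nat p = Some y, p y & (y <= n)%N].
Proof.
move=> pn; rewrite /least_nat; case: excluded_middle_informative => [h|[]]; last by exists n.
by case: ex_minnP => y py ymin; exists y; split; last exact: ymin.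
Qed.

Section SingleStage.
Variables (m : nat) (P : nat -> nat) (k : nat) (x : nat -> int).

Lemma A_congrP (y : nat) :
  reflect (forall i, (i < m)%N -> i != k -> ((A_Gik P k i)%:Z %| y%:Z - A_xi P k x i)%Z)
          (A_congr m P k x y).
Proof.
apply: (iffP allP) => [h i im ik | h i].
  by move: (h i); rewrite mem_iota add0n im (negbTE ik) -eqz_mod_dvd; apply.
rewrite mem_iota add0n => /andP[_ im]; case: eqP => //= /eqP ik.
by rewrite eqz_mod_dvd h.
Qed.

Lemma A_qE (Y : nat) (e : nat -> int) i : (0 < P k)%N ->
  x i = (Y %% P i)%N%:Z + e i -> x k = (Y %% P k)%N%:Z + e k ->
  2 * `|e i - e k| < (gcdn (P k) (P i))%:Z ->
  A_q P k x i = ((Y %/ P k) * A_Gki P k i)%N%:Z - ((Y %/ P i) * A_Gik P k i)%N%:Z.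
Proof.
move=> Pk0 xi xk he; rewrite /A_q -/(A_m P k i).
have g0 : (0 < A_m P k i)%N by rewrite gcdn_gt0 Pk0.
have gPk : (A_Gki P k i * A_m P k i = P k)%N by rewrite divnK // dvdn_gcdl.
have gPi : (A_Gik P k i * A_m P k i = P i)%N by rewrite divnK // dvdn_gcdr.
have Ri := divn_eq Y (P i); have Rk := divn_eq Y (P k).
rewrite -gPi mulnA in Ri; rewrite -gPk mulnA in Rk.
have -> : x i - x k = (((Y %/ P k) * A_Gki P k i)%N%:Z - ((Y %/ P i) * A_Gik P k i)%N%:Z)
                      * (A_m P k i)%:Z + (e i - e k).
  by rewrite xi xk; lia.
exact: round_divMDl.
Qed.

Lemma A_xi_congr i (nk ni : nat) : (0 < P k)%N ->
  A_q P k x i = (nk * A_Gki P k i)%N%:Z - (ni * A_Gik P k i)%N%:Z ->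
  ((A_Gik P k i)%:Z %| nk%:Z - A_xi P k x i)%Z.
Proof.
move=> Pk0 Hq.
have a0 : (0 < A_Gki P k i)%N.
  by rewrite divn_gt0 ?gcdn_gt0 ?Pk0 // dvdn_leq // dvdn_gcdl.
rewrite /A_xi /A_Gbar; case: (egcdnP (A_Gik P k i) a0) => u v Huv _.
rewrite (eqP (coprime_divn_gcd _ Pk0)) in Huv.
rewrite Hq; set a := A_Gki P k i in Huv *; set b := A_Gik P k i in Huv *.
have Huv' : u%:Z * a%:Z = v%:Z * b%:Z + 1 by rewrite -!PoszM Huv PoszD.
set w := (_ * _)%R; have Ew := divz_eq w b.
apply/dvdzP; exists (ni%:Z * u%:Z - nk%:Z * v%:Z + (w %/ b)%Z).
have -> : (w %% b)%Z = w - (w %/ b)%Z * b by rewrite {2}Ew; ring.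
rewrite /w !PoszM; apply/eqP; rewrite -subr_eq0; apply/eqP.
transitivity (nk%:Z * (v%:Z * b%:Z + 1 - u%:Z * a%:Z)); first by ring.
by rewrite Huv'; ring.
Qed.

Lemma A_congr_dvd_lcm (y y' : nat) : (y <= y')%N ->
  A_congr m P k x y -> A_congr m P k x y' ->
  (\big[lcmn/1%N]_(i < m) P i %| (y' - y) * P k)%N.
Proof.
move=> yy' /A_congrP hy /A_congrP hy'; apply/dvdn_biglcmP => i _.
have [<-|ik] := eqVneq (val i) k; first exact: dvdn_mull.
apply: dvdn_mul_divn_gcd.
have := rpredB (hy' _ (ltn_ord i) ik) (hy _ (ltn_ord i) ik).
by rewrite (_ : _ - _ - _ = (y' - y)%N%:Z) ?dvdzE //; lia.
Qed.

Lemma algA_correct (Y : nat) (e : nat -> int) :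
  (k < m)%N -> (forall i, (i < m)%N -> (0 < P i)%N) ->
  (Y < \big[lcmn/1%N]_(i < m) P i)%N ->
  (forall i, (i < m)%N -> x i = (Y %% P i)%N%:Z + e i) ->
  (forall i, (i < m)%N -> i != k -> 2 * `|e i - e k| < (gcdn (P k) (P i))%:Z) ->
  exists f, algA m P k x = Some f /\ forall i, (i < m)%N -> f i = (Y %/ P i)%N%:Z.
Proof.
move=> km Ppos Ylt xE eE; have Pk0 := Ppos k km.
have Hq i : (i < m)%N -> i != k -> A_q P k x i =
    ((Y %/ P k) * A_Gki P k i)%N%:Z - ((Y %/ P i) * A_Gik P k i)%N%:Z.
  by move=> im ik; apply: A_qE => //; [exact: xE | exact: xE | exact: eE].
have Cnk : A_congr m P k x (Y %/ P k).
  by apply/A_congrP => i im ik; apply: A_xi_congr (Hq i im ik).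
rewrite /algA; have [y [-> Cy le_y]] := least_nat_min Cnk.
have Ey : y = (Y %/ P k)%N.
  have /dvdn_leq : (\big[lcmn/1%N]_(i < m) P i %| (Y %/ P k - y) * P k)%N.
    exact: A_congr_dvd_lcm.
  have : ((Y %/ P k - y) * P k <= Y)%N.
    by apply: leq_trans (leq_divM Y (P k)); rewrite leq_mul2r leq_subr orbT.
  move: Ylt le_y; rewrite muln_gt0 Pk0 andbT; lia.
eexists; split; first reflexivity.
move=> i im /=; have [->|ik] := eqVneq i k; first by rewrite Ey.
have b0 : (A_Gik P k i)%:Z != 0.
  by rewrite eqz_nat -lt0n divn_gt0 ?gcdn_gt0 ?Pk0 // dvdn_leq ?Ppos ?dvdn_gcdr.
by rewrite Ey Hq // (_ : _ - _ = (Y %/ P i)%N%:Z * (A_Gik P k i)%:Z) ?mulzK // PoszM; ring.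
Qed.

End SingleStage.

Section TwoStage.
Variables (R : archiRealFieldType) (s : nat) (L : nat -> nat) (M : nat -> nat -> nat)
  (N : nat) (rt : nat -> nat -> int) (tau : nat -> R) (kr : nat -> nat) (k0 : nat).

Hypothesis L_gt0 : forall j, (j < s)%N -> (0 < L j)%N.
Hypothesis M_gt0 : forall j i, (j < s)%N -> (i < L j)%N -> (0 < M j i)%N.
Hypothesis N_lt : (N < \big[lcmn/1%N]_(j < s) delta L M j)%N.
Hypothesis rt_err : forall j i, (j < s)%N -> (i < L j)%N ->
  `|(rt j i - (N %% M j i)%N%:Z)%:~R| <= tau j.
Hypothesis tau_lt_group : forall j, (j < s)%N -> (2 <= L j)%N ->
  tau j < (maxmingcd (L j) (M j))%:R / 4.
Hypothesis tau_lt_delta : forall j, (j < s)%N -> tau j < (maxmingcd s (delta L M))%:R / 4.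
Hypothesis kr_max : forall j, (j < s)%N -> (2 <= L j)%N ->
  (kr j < L j)%N /\ mingcd (L j) (M j) (kr j) = maxmingcd (L j) (M j).
Hypothesis k0_lt : (k0 < s)%N.
Hypothesis k0_max : mingcd s (delta L M) k0 = maxmingcd s (delta L M).

Local Notation err j i := (rt j i - (N %% M j i)%N%:Z).

Lemma delta_gt0 j : (j < s)%N -> (0 < delta L M j)%N.
Proof. by move=> js; apply: biglcm_gt0 => i; apply: M_gt0. Qed.

Lemma dvdn_delta j i : (i < L j)%N -> (M j i %| delta L M j)%N.
Proof. by move=> iL; apply: (biglcmn_sup (Ordinal iL)). Qed.

Lemma rt_mod_delta j i : (i < L j)%N ->
  rt j i = ((N %% delta L M j) %% M j i)%N%:Z + err j i.
Proof. by move=> iL; rewrite (modn_dvdm N (dvdn_delta iL)) addrC subrK. Qed.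

Lemma stage1_correct j : (j < s)%N -> exists K, stage1 L M rt kr j = Some K /\
  forall i, (i < L j)%N -> K i = ((N %% delta L M j) %/ M j i)%N%:Z.
Proof.
move=> js; rewrite /stage1; case: ifP => L2.
  have [krL kr_mingcd] := kr_max js L2.
  apply: (algA_correct (e := fun i => err j i)) => //.
  - by move=> i; apply: M_gt0.
  - exact: ltn_pmod (delta_gt0 js).
  - by move=> i; apply: rt_mod_delta.
  apply: (double_normB_lt_mingcd (t := fun=> tau j)) => // i iL.
  by rewrite intr_norm kr_mingcd rt_err // tau_lt_group.
have L1 : L j = 1%N by apply/eqP; rewrite eqn_leq -ltnS ltnNge L2 L_gt0.
exists (fun=> 0); split => // i; rewrite L1 ltnS leqn0 => /eqP ->.
have delta1 : delta L M j = M j 0%N by rewrite /delta L1 big_ord1.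
by rewrite delta1 divn_small // ltn_pmod // M_gt0 // L1.
Qed.

Lemma KhatE j i : (j < s)%N -> (i < L j)%N ->
  Khat L M rt kr j i = ((N %% delta L M j) %/ M j i)%N%:Z.
Proof.
by move=> js iL; rewrite /Khat; have [K [-> /= ->]] := stage1_correct js. Qed.

Lemma Nhat_group_err j : (j < s)%N ->
  `|Nhat_group L M rt kr j - (N %% delta L M j)%N%:Z| <= Num.floor (tau j).
Proof.
move=> js; rewrite /Nhat_group.
rewrite (eq_bigr (fun i : 'I_(L j) => ((N %% delta L M j)%N%:Z + err j i)%:~R)); last first.
  move=> i _; congr (_%:~R).
  by rewrite KhatE // [in LHS](rt_mod_delta (ltn_ord i)) -PoszM addrA -PoszD -divn_eq.
apply: round_mean_dist_le; first exact: L_gt0.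
by move=> i; rewrite floor_ge_int intr_norm rt_err.
Qed.

Lemma stage2_correct : exists l, algA s (delta L M) k0 (Nhat_group L M rt kr) = Some l /\
  forall j, (j < s)%N -> l j = (N %/ delta L M j)%N%:Z.
Proof.
pose E j := Nhat_group L M rt kr j - (N %% delta L M j)%N%:Z.
apply: (algA_correct (e := E)) => //.
- exact: delta_gt0.
- by move=> j _; rewrite /E addrC subrK.
apply: (double_normB_lt_mingcd (t := tau)) => // j js.
by rewrite -floor_ge_int Nhat_group_err // k0_max tau_lt_delta.
Qed.

Lemma two_stage_correct : exists nh, two_stage s L M rt kr k0 = Some nh /\
  forall j i, (j < s)%N -> (i < L j)%N -> nh j i = (N %/ M j i)%N%:Z.
Proof.
have [l [Hl Hlv]] := stage2_correct.
have stage1_ok : all (fun j => isSome (stage1 L M rt kr j)) (iota 0 s).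
  apply/allP => j; rewrite mem_iota add0n => /andP[_ js].
  by have [K [-> _]] := stage1_correct js.
rewrite /two_stage stage1_ok Hl; eexists; split; first reflexivity.
move=> j i js iL /=; rewrite Hlv // KhatE // -PoszM -PoszD.
by rewrite divnMD_dvd ?dvdn_delta ?M_gt0.
Qed.

Lemma Nhat_final_err (nh : nat -> nat -> int) : (0 < s)%N ->
  (forall j i, (j < s)%N -> (i < L j)%N -> nh j i = (N %/ M j i)%N%:Z) ->
  `|Nhat_final s L M rt nh - N%:Z| <=
    round ((\sum_(j < s) (L j)%:R * tau j) / (\sum_(j < s) L j)%N%:R).
Proof.
move=> s0 nhE; set S := (\sum_(j < s) L j)%N.
have S0 : (0 < S)%N.
  by rewrite /S (bigD1 (Ordinal s0)) //= addn_gt0 L_gt0.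
pose T := \sum_(j < s) \sum_(i < L j) (err j i).
rewrite /Nhat_final -/S.
rewrite (_ : \sum_(j < s) \sum_(i < L j) _ = S%:R * N%:~R + T%:~R); last first.
  rewrite /S natr_sum /T rmorph_sum mulr_suml -big_split; apply: eq_bigr => j _.
  rewrite rmorph_sum /= mulr_natl.
  have -> : (N%:~R *+ L j : rat) = \sum_(i < L j) N%:~R by rewrite sumr_const card_ord.
  rewrite -big_split.
  apply: eq_bigr => i _; transitivity ((N%:Z + err j i)%:~R : rat); last by rewrite intrD.
  congr (_%:~R); rewrite nhE //.
  transitivity ((N %/ M j i * M j i + N %% M j i)%N%:Z + err j i); last by rewrite -divn_eq.
  by rewrite PoszD PoszM; ring.
apply: round_shift_dist_le => //.
rewrite divfK ?pnatr_eq0 -?lt0n // intr_norm /T rmorph_sum.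
apply: le_trans (ler_norm_sum _ _ _) _; apply: ler_sum => j _.
rewrite rmorph_sum; apply: le_trans (ler_norm_sum _ _ _) _.
have -> : (L j)%:R * tau j = \sum_(i < L j) tau j by rewrite sumr_const card_ord mulr_natl.
by apply: ler_sum => i _; apply: rt_err.
Qed.

End TwoStage.

Theorem theorem3 (R : archiRealFieldType) (s : nat) (L : nat -> nat) (M : nat -> nat -> nat)
  (N : nat) (rt : nat -> nat -> int) (tau : nat -> R) (kr : nat -> nat) (k0 : nat) :
  (2 <= s)%N ->
  (forall j, (j < s)%N -> (1 <= L j)%N) ->
  (forall j i, (j < s)%N -> (i < L j)%N -> (0 < M j i)%N) ->
  (forall j i, (j < s)%N -> (i.+1 < L j)%N -> (M j i < M j i.+1)%N) ->
  (forall j1 j2, (j1 < s)%N -> (j2 < s)%N -> j1 != j2 -> delta L M j1 != delta L M j2) ->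
  (N < \big[lcmn/1%N]_(j < s) delta L M j)%N ->
  (forall j i, (j < s)%N -> (i < L j)%N ->
     0 <= rt j i <= (M j i)%:Z - 1 /\
     `|(rt j i - (N %% M j i)%N%:Z)%:~R| <= tau j) ->
  (forall j, (j < s)%N ->
     tau j < (if (2 <= L j)%N then (maxmingcd (L j) (M j))%:R / 4
              else (M j 0%N)%:R / 4)
     /\ tau j < (maxmingcd s (delta L M))%:R / 4) ->
  (forall j, (j < s)%N -> (2 <= L j)%N ->
     (kr j < L j)%N /\ mingcd (L j) (M j) (kr j) = maxmingcd (L j) (M j)) ->
  (k0 < s)%N -> mingcd s (delta L M) k0 = maxmingcd s (delta L M) ->
  exists nh : nat -> nat -> int,
    two_stage s L M rt kr k0 = Some nh /\
    (forall j i, (j < s)%N -> (i < L j)%N ->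
       nh j i = ((N - N %% M j i) %/ M j i)%N%:Z) /\
    `|Nhat_final s L M rt nh - N%:Z| <=
      round ((\sum_(j < s) (L j)%:R * tau j) / (\sum_(j < s) L j)%N%:R).
Proof.
move=> s2 L_gt0 M_gt0 _ _ N_lt rt_spec tau_lt kr_max k0_lt k0_max.
have rt_err j i js iL := (rt_spec j i js iL).2.
have tau_lt_group j : (j < s)%N -> (2 <= L j)%N -> tau j < (maxmingcd (L j) (M j))%:R / 4.
  by move=> js L2; have := (tau_lt j js).1; rewrite L2.
have tau_lt_delta j js := (tau_lt j js).2.
have [nh [Hnh nhE]] := two_stage_correct L_gt0 M_gt0 N_lt rt_err tau_lt_group
  tau_lt_delta kr_max k0_lt k0_max.
exists nh; split => //; split.
  by move=> j i js iL; rewrite nhE // divn_subn_mod // M_gt0.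
exact: Nhat_final_err L_gt0 rt_err _ (ltnW s2) nhE.
Qed.
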